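(* Let $\mathcal Y$ be a finite set, $\mathcal W\subseteq\mathbb{R}^D$ a convex set, $f_i:\mathcal Y\times\mathbb{R}^D\to\mathbb{R}$ ($i=1,\dots,n$) functions convex and differentiable in $w$ with Lipschitz continuous gradients, and $r:\mathbb{R}^D\to\mathbb{R}$ strongly convex and differentiable with Lipschitz continuous gradient, such that each $g_i(w):=r(w)+\max_{y\in\mathcal Y}f_i(y,w)$ is $\mu$-strongly convex on $\mathcal W$. Suppose there exists $w_0\in\mathcal W$ with $g_i(w_0)=0$ for all $i$, and let $$\Delta=\max_{w,i,j,y}\big|\partial_j[r(w)+f_i(y,w)]\big|,$$ where the maximum ranges over all indices $i$, all $y\in\mathcal Y$, all $w\in\mathcal W$ and all coordinates $j$ of $w$. Then: (a) for any $w_1,w_2\in\mathcal W$, $\|w_1-w_2\|\le\frac{2\sqrt D\,\Delta}{\mu}$; (b) for any index $i$ and any $w\in\mathcal W$, $|g_i(w)|\le\frac{2D\Delta^2}{\mu}$.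
   Context: $\partial_j$ denotes the partial derivative with respect to the $j$-th coordinate of $w$. *)

From HB Require Import structures.
From mathcomp Require Import all_boot all_order all_algebra.
From mathcomp Require Import all_classical all_reals all_analysis.
Set Implicit Arguments. Unset Strict Implicit. Unset Printing Implicit Defensive.
Import Order.TTheory GRing.Theory Num.Theory.
Import numFieldNormedType.Exports.
Local Open Scope classical_set_scope.
Local Open Scope ring_scope.

(* Euclidean norm on R^D (the library's default norm on row vectors is the sup norm) *)
Definition enorm (R : realType) (D : nat) (v : 'rV[R]_D) : R :=
  Num.sqrt (\sum_(j < D) v ord0 j ^+ 2).

Definition ebasis (R : realType) (D : nat) (j : 'I_D) : 'rV[R]_D := delta_mx ord0 j.

Definition partial (R : realType) (D : nat) (j : 'I_D) (f : 'rV[R]_D -> R)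
  (w : 'rV[R]_D) : R := derive f w (ebasis R j).

Definition grad (R : realType) (D : nat) (f : 'rV[R]_D -> R) (w : 'rV[R]_D)
  : 'rV[R]_D := \row_j partial j f w.

Definition lipschitz_grad (R : realType) (D : nat) (f : 'rV[R]_D -> R) : Prop :=
  exists L : R, forall x y : 'rV[R]_D,
    enorm (grad f x - grad f y) <= L * enorm (x - y).

Definition differentiable_everywhere (R : realType) (D : nat)
  (f : 'rV[R]_D -> R) : Prop := forall w, differentiable f w.

Definition convex_subset (R : realType) (D : nat) (A : set 'rV[R]_D) : Prop :=
  forall x y t, A x -> A y -> 0 <= t <= 1 -> A (t *: x + (1 - t) *: y).

Definition strongly_convex_on (R : realType) (D : nat) (A : set 'rV[R]_D)
  (m : R) (g : 'rV[R]_D -> R) : Prop :=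
  forall x y t, A x -> A y -> 0 <= t <= 1 ->
    g (t *: x + (1 - t) *: y) <=
      t * g x + (1 - t) * g y - m / 2 * t * (1 - t) * enorm (x - y) ^+ 2.

Definition convex_fun (R : realType) (D : nat) (g : 'rV[R]_D -> R) : Prop :=
  strongly_convex_on setT 0 g.

(* maximum over a nonempty finite type Y (y0 witnesses nonemptiness; the value
   does not depend on y0) *)
Definition fmax (R : realType) (Y : finType) (y0 : Y) (h : Y -> R) : R :=
  \big[Num.max/h y0]_(y : Y) h y.

(* Put g_i := r + max_y f_i(y, .) and L := sqrt D * Delta.  Each r + f_i(y, .)
   is convex, so the gradient inequality at w, with every partial derivative
   bounded by Delta and the l1 norm bounded by sqrt D times the Euclidean norm,
   gives g_i w - g_i w' <= L |w - w'| on W.  Playing this Lipschitz bound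
   against mu-strong convexity of g_i near both ends of a segment of W yields
   mu |w1 - w2| <= 2 L, which is (a); then (b) follows from g_i w0 = 0 since
   |g_i w| <= L * 2 L / mu = 2 D Delta^2 / mu. *)

From HB Require Import structures.
From mathcomp Require Import all_boot all_order all_algebra.
From mathcomp Require Import all_classical all_reals all_analysis.
From mathcomp Require Import ring lra.
Import Order.TTheory GRing.Theory Num.Theory.
Import numFieldNormedType.Exports.
Local Open Scope classical_set_scope.
Local Open Scope ring_scope.

Lemma ler_of_mul_lt1 (R : realFieldType) (a b : R) :
  0 <= b -> (forall t, 0 < t < 1 -> t * a <= b) -> a <= b.
Proof.
move=> b_ge0 tab; rewrite leNgt; apply/negP => ba.
have a_gt0 : 0 < a by apply: le_lt_trans ba.
have := tab ((a + b) / (2 * a)).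
rewrite divr_gt0 ?mulr_gt0 ?ltr_pdivrMr ?mulr_gt0 //=; last by lra.
have -> : (a + b) / (2 * a) * a = (a + b) / 2 by field; rewrite gt_eqF.
rewrite mul1r; lra.
Qed.

Section EuclideanNorm.
Local Set Implicit Arguments.
Local Unset Strict Implicit.
Context {R : realType} {D : nat}.

Lemma sqr_sum_le (a : 'I_D -> R) : (\sum_j a j) ^+ 2 <= D%:R * \sum_j a j ^+ 2.
Proof.
have amgm i j : a i * a j <= (a i ^+ 2 + a j ^+ 2) / 2.
  by have := sqr_ge0 (a i - a j); rewrite !expr2; lra.
rewrite expr2 mulr_suml (_ : D%:R * _ = \sum_i \sum_j (a i ^+ 2 + a j ^+ 2) / 2).
  by apply: ler_sum => i _; rewrite mulr_sumr; apply: ler_sum => j _.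
under [RHS]eq_bigr do rewrite -mulr_suml big_split /= sumr_const card_ord.
by rewrite -mulr_suml big_split /= sumr_const card_ord sumrMnl -mulr_natl; field.
Qed.

Lemma enormZ (t : R) (v : 'rV[R]_D) : enorm (t *: v) = `|t| * enorm v.
Proof.
rewrite /enorm; under eq_bigr do rewrite mxE exprMn.
by rewrite -mulr_sumr sqrtrM ?sqr_ge0 // sqrtr_sqr.
Qed.

Lemma enorm_distC (v w : 'rV[R]_D) : enorm (v - w) = enorm (w - v).
Proof. by rewrite -opprB -scaleN1r enormZ normrN normr1 mul1r. Qed.

Lemma sum_norm_le_enorm (v : 'rV[R]_D) :
  \sum_j `|v ord0 j| <= Num.sqrt D%:R * enorm v.
Proof.
rewrite /enorm -sqrtrM ?ler0n // -[leLHS]ger0_norm ?sumr_ge0 // -sqrtr_sqr.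
rewrite ler_wsqrtr // (le_trans (sqr_sum_le (fun j => `|v ord0 j|))) //.
by rewrite (eq_bigr _ (fun j _ => real_normK (num_real (v ord0 j)))).
Qed.

End EuclideanNorm.

Section Convexity.
Local Set Implicit Arguments.
Local Unset Strict Implicit.
Context {R : realType} {D : nat}.
Implicit Types (A : set 'rV[R]_D) (g h : 'rV[R]_D -> R).

Lemma strongly_convex_onD A m1 m2 g h :
  strongly_convex_on A m1 g -> strongly_convex_on A m2 h ->
  strongly_convex_on A (m1 + m2) (g \+ h).
Proof.
move=> gc hc x y t Ax Ay t01.
by have := gc x y t Ax Ay t01; have := hc x y t Ax Ay t01; rewrite /=; lra.
Qed.

Lemma strongly_convex_on_le A m m' g :
  m' <= m -> strongly_convex_on A m g -> strongly_convex_on A m' g.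
Proof.
move=> m'm gc x y t Ax Ay t01; have := gc x y t Ax Ay t01.
have /andP[t0 t1] := t01; set e := enorm (x - y).
have : 0 <= (m - m') / 2 * t * (1 - t) * e ^+ 2.
  by rewrite mulr_ge0 ?sqr_ge0 // mulr_ge0 ?subr_ge0 // mulr_ge0 // divr_ge0 ?subr_ge0.
lra.
Qed.

Lemma derive_partialE h z v :
  differentiable h z -> derive h z v = \sum_j v ord0 j * partial j h z.
Proof.
move=> dz; rewrite deriveE // {1}(row_sum_delta v) linear_sum /=.
by apply: eq_bigr => j _; rewrite linearZ /= /partial deriveE.
Qed.

Lemma norm_derive_le h z v (Delta : R) :
  differentiable h z -> (forall j, `|partial j h z| <= Delta) ->
  `|derive h z v| <= Delta * \sum_j `|v ord0 j|.
Proof.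
move=> dz hb; rewrite derive_partialE // mulr_sumr.
apply: le_trans (ler_norm_sum _ _ _) _; apply: ler_sum => j _.
by rewrite normrM mulrC ler_wpM2r.
Qed.

(* The difference quotients of [h] along [x - z] are bounded by [h x - h z]
   on [0, 1] by convexity, hence so is their limit at [0^'+]. *)
Lemma convex_derive_le h x z :
  convex_fun h -> differentiable h z -> derive h z (x - z) <= h x - h z.
Proof.
move=> hc dz.
pose q t := t^-1 *: (h (t *: (x - z) + z) - h z).
have q_cvg : q t @[t --> 0^'+] --> derive h z (x - z).
  apply: cvg_trans (diff_derivable dz); apply: cvg_app.
  by apply: within_subset => t /= t0; rewrite gt_eqF.
apply: (cvgr_to_le q_cvg); near=> t.
have t_gt0 : 0 < t by near: t; exact: nbhs_right_gt.
have t_le1 : t <= 1 by near: t; exact: nbhs_right_le.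
have := hc x z t I I; rewrite t_le1 ltW //= => /(_ isT).
have -> : t *: x + (1 - t) *: z = t *: (x - z) + z.
  by rewrite scalerBl scale1r scalerBr addrCA addrC.
rewrite /q /= ler_pdivrMl //; lra.
Unshelve. all: by end_near.
Qed.

Lemma convex_sub_le_partial h x z (Delta : R) :
  convex_fun h -> differentiable h x -> 0 <= Delta ->
  (forall j, `|partial j h x| <= Delta) ->
  h x - h z <= Num.sqrt D%:R * Delta * enorm (x - z).
Proof.
move=> hc dx Delta_ge0 hb.
apply: (@le_trans _ _ (- derive h x (z - x))).
  by rewrite -opprB lerN2 convex_derive_le.
apply: le_trans (ler_norm _) _; rewrite normrN.
apply: (le_trans (norm_derive_le (z - x) dx hb)).
by rewrite [_ * Delta]mulrC -mulrA ler_wpM2l // enorm_distC sum_norm_le_enorm.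
Qed.

(* Strong convexity at [t *: w1 + (1 - t) *: w2], together with the Lipschitz
   bound from [w1], gives [(1 - t) (g w1 - g w2) + mu t (1 - t) d^2 / 2 <=
   L (1 - t) d]; adding the same bound with [w1], [w2] swapped yields
   [mu t d <= 2 L] for every [t < 1]. *)
Lemma strongly_convex_diam_le A (mu L : R) g :
  convex_subset A -> 0 < mu -> 0 <= L -> strongly_convex_on A mu g ->
  (forall x z, A x -> A z -> g x - g z <= L * enorm (x - z)) ->
  forall w1 w2, A w1 -> A w2 -> enorm (w1 - w2) <= 2 * L / mu.
Proof.
move=> Ac mu_gt0 L_ge0 gc g_lip w1 w2 Aw1 Aw2.
rewrite ler_pdivlMr //; apply: ler_of_mul_lt1; first by rewrite mulr_ge0.
move=> t /andP[t_gt0 t_lt1].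
have t_le1 := ltW t_lt1; have t01 : 0 <= t <= 1 by rewrite ltW.
have toward a b : A a -> A b ->
    (1 - t) * (g a - g b) + mu / 2 * t * (1 - t) * enorm (a - b) ^+ 2
    <= L * ((1 - t) * enorm (a - b)).
  move=> Aa Ab; have := gc a b t Aa Ab t01.
  have := g_lip a _ Aa (Ac a b t Aa Ab t01).
  have -> : a - (t *: a + (1 - t) *: b) = (1 - t) *: (a - b).
    by apply/rowP => j; rewrite !mxE; ring.
  rewrite enormZ ger0_norm ?subr_ge0 //; lra.
have := toward w1 w2 Aw1 Aw2; have := toward w2 w1 Aw2 Aw1.
rewrite (enorm_distC w2); set d := enorm (w1 - w2) => h21 h12.
have : 0 <= d := sqrtr_ge0 _.
rewrite le_eqVlt => /orP[/eqP d0 | d_gt0]; first by rewrite -d0 mul0r mulr0 mulr_ge0.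
by rewrite -(ler_pM2l (_ : 0 < (1 - t) * d)) ?mulr_gt0 ?subr_gt0 //; lra.
Qed.
End Convexity.

Section FiniteMax.
Local Set Implicit Arguments.
Local Unset Strict Implicit.
Context {R : realType} {Y : finType} (y0 : Y).
Implicit Types (a b : Y -> R) (c : R).

Lemma le_fmax a y : a y <= fmax y0 a.
Proof. by rewrite /fmax (bigD1 y) //= le_max lexx. Qed.

Lemma fmax_le a c : (forall y, a y <= c) -> fmax y0 a <= c.
Proof.
move=> ac; apply: (big_ind (fun x => x <= c)) => // x x' xc x'c.
by rewrite ge_max xc x'c.
Qed.

Lemma fmaxDl c a : c + fmax y0 a = fmax y0 (fun y => c + a y).
Proof. exact: (big_morph (+%R c) (addr_maxr c)). Qed.

Lemma fmax_subr_le a b c :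
  (forall y, a y - b y <= c) -> fmax y0 a - fmax y0 b <= c.
Proof.
move=> abc; rewrite lerBlDl; apply: fmax_le => y.
by apply: (@le_trans _ _ (b y + c)); rewrite ?lerD2r ?le_fmax // -lerBlDl.
Qed.

End FiniteMax.

Theorem mainTheorem3 (R : realType) (D n : nat) (Y : finType) (y0 : Y)
  (W : set 'rV[R]_D)
  (f : 'I_n -> Y -> 'rV[R]_D -> R) (r : 'rV[R]_D -> R) (mu Delta : R) :
  convex_subset W ->
  (forall i y, convex_fun (f i y)) ->
  (forall i y, differentiable_everywhere (f i y)) ->
  (forall i y, lipschitz_grad (f i y)) ->
  (exists m : R, 0 < m /\ strongly_convex_on setT m r) ->
  differentiable_everywhere r ->
  lipschitz_grad r ->
  0 < mu ->
  (forall i, strongly_convex_on W mu (fun w => r w + fmax y0 (fun y => f i y w))) ->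
  (exists w0, W w0 /\ forall i, r w0 + fmax y0 (fun y => f i y w0) = 0) ->
  (* Delta is the maximum of |d_j [r(w) + f_i(y,w)]| over i, y, w in W, j *)
  (forall i y w j, W w -> `|partial j (fun v => r v + f i y v) w| <= Delta) ->
  (exists i y w j, W w /\ `|partial j (fun v => r v + f i y v) w| = Delta) ->
  (forall w1 w2, W w1 -> W w2 ->
     enorm (w1 - w2) <= 2 * Num.sqrt (D%:R) * Delta / mu) /\
  (forall i w, W w ->
     `|r w + fmax y0 (fun y => f i y w)| <= 2 * D%:R * Delta ^+ 2 / mu).
Proof.
move=> W_cvx f_cvx f_diff _ [m [m_gt0 r_sc]] r_diff _ mu_gt0 g_sc [w0 [Ww0 g_w0]]
  dg_le [i0 [? [? [? [_ dg_eq]]]]].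
have Delta_ge0 : 0 <= Delta by rewrite -dg_eq.
pose L := Num.sqrt D%:R * Delta.
have L_ge0 : 0 <= L by rewrite mulr_ge0 ?sqrtr_ge0.
have g_lip i x z : W x -> W z ->
    r x + fmax y0 (fun y => f i y x) - (r z + fmax y0 (fun y => f i y z))
    <= L * enorm (x - z).
  move=> Wx _; rewrite !fmaxDl; apply: fmax_subr_le => y.
  apply: (convex_sub_le_partial (h := fun v => r v + f i y v)) => // [||j].
  - apply: (strongly_convex_on_le (m := m + 0)); first by rewrite addr0 ltW.
    exact: strongly_convex_onD r_sc (f_cvx i y).
  - exact: differentiableD (r_diff x) (f_diff i y x).
  - exact: dg_le.
have diam := strongly_convex_diam_le W_cvx mu_gt0 L_ge0 (g_sc i0) (g_lip i0).
split=> [w1 w2 Ww1 Ww2 | i w Ww]; first by have := diam w1 w2 Ww1 Ww2; rewrite mulrA.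
have := g_lip i w w0 Ww Ww0; have := g_lip i w0 w Ww0 Ww.
rewrite g_w0 sub0r subr0 (enorm_distC w0) => g_ge g_le.
have : L * enorm (w - w0) <= L * (2 * L / mu) by rewrite ler_wpM2l ?diam.
have -> : L * (2 * L / mu) = 2 * D%:R * Delta ^+ 2 / mu.
  have L_sqr : L ^+ 2 = D%:R * Delta ^+ 2 by rewrite exprMn sqr_sqrtr ?ler0n.
  by transitivity (2 * L ^+ 2 / mu); [ring | rewrite L_sqr mulrA].
by rewrite ler_norml => ?; apply/andP; split; lra.
Qed.
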